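(* Let $T^{\natural}=(S^{\natural},I^{\natural},R^{\natural},V^{\natural})$ be an infinite-state transition system, $\varphi$ a set of predicates with $V(\varphi)\subseteq V^{\natural}_{int}$, $T^{\sharp}=(S^{\sharp},I^{\sharp},R^{\sharp},V^{\sharp})$ the partially predicate abstracted transition system, and $T^{\sharp}_{RS}=\big((\mu Z.\,I^{\sharp}\vee post[R^{\sharp}](Z))^{+},I^{\sharp},R^{\sharp},V^{\sharp}\big)$, all as defined in the context. For every ACTL formula $f^{\sharp}$ over $V^{\sharp}$, if $I^{\sharp}\subseteq\llbracket f^{\sharp}\rrbracket^{-}_{T^{\sharp}_{RS}}$ then $T^{\natural}\models\gamma(f^{\sharp})$.
   Context: A transition system $T=(S,I,R,V)$ has variables $V=V_{bool}\cup V_{int}$, states $S\subseteq\mathcal{B}^{|V_{bool}|}\times\mathcal{Z}^{|V_{int}|}$, initial states $I\subseteq S$, transition relation $R\subseteq S\times S$; $T\models f$ means all initial states satisfy the CTL formula $f$; ACTL is the universal fragment of CTL. $post[R](A)=\{y\mid x\in A,(x,y)\in R\}$. Given predicates $\varphi=\{\varphi_1,\dots,\varphi_n\}$ over integer variables, $V(\varphi)$ is the set of their variables and $\varphi_i'$ their primed (next-state) versions; fresh booleans $b_i,b_i'$ stand for $\varphi_i,\varphi_i'$. $\alpha(s)=\exists V(\varphi).(s\wedge\bigwedge_i(\varphi_i\iff b_i))$; with $CS=\bigwedge_i\big((\bigwedge_{v\in V(\varphi_i)}v'=v)\implies(b_i'\iff b_i)\big)$, $\alpha^{\tau}(r)=\exists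 V(\varphi).\exists V(\varphi').\big(r\wedge CS\wedge\bigwedge_i(\varphi_i\iff b_i)\wedge\bigwedge_i(\varphi_i'\iff b_i')\big)$. $T^{\sharp}$ has variables $V^{\sharp}=(V^{\natural}\cup\{b_i\})\setminus V(\varphi)$, $S^{\sharp}=\bigcup_{s\in S^{\natural}}\alpha(s)$, $I^{\sharp}=\bigcup_{s\in I^{\natural}}\alpha(s)$, $R^{\sharp}=\bigcup_{r\in R^{\natural}}\alpha^{\tau}(r)$. $\gamma$ on formulas replaces each $b_i$ by $\varphi_i$ in every atomic subformula. $(\mu Z.\,I^{\sharp}\vee post[R^{\sharp}](Z))^{+}$ denotes an over-approximation (superset) of the set of reachable states of $T^{\sharp}$, computed by iterating the least fixpoint with a widening operator; $T^{\sharp}_{RS}$ is $T^{\sharp}$ with its state space restricted to this set. $\llbracket f\rrbracket^{-}_{T}$ denotes the under-approximation of the set of states of $T$ satisfying $f$ computed by approximate symbolic CTL model checking (Bultan–Gerber–Pugh style): the fixpoint characterizations of the temporal operators (in terms of pre-images, within the state space of $T$) are approximated recursively, using the dual of widening for greatest fixpoints and truncating least-fixpoint iterations after finitely many steps when under-approximating, and using widening for least fixpoints and truncating greatest-fixpoint iterations when over-approximating (as required under negations). Here a widening $\triangle$ satisfies $x\sqcup y\sqsubseteq x\triangle y$ and makes every chain $y_{k+1}=y_k\triangle x_{k+1}$ stabilize; a dual widening $\nabla$ satisfies $x\nabla y\sqsubseteq x\sqcap y$ and makes every chain $y_{k+1}=y_k\nabla x_{k+1}$ stabilize. *)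

From Stdlib Require Import ZArith Arith.
Set Implicit Arguments.

(** * Transition systems (the variables V are implicit in the state type St:
      a state is a valuation of V). *)
Record TS (St : Type) := mkTS {
  ts_S : St -> Prop;
  ts_I : St -> Prop;
  ts_R : St -> St -> Prop
}.
Arguments mkTS {St}.
Arguments ts_S {St}.
Arguments ts_I {St}.
Arguments ts_R {St}.

Definition subset {St : Type} (A B : St -> Prop) : Prop := forall s, A s -> B s.

Definition lfp {St : Type} (F : (St -> Prop) -> (St -> Prop)) : St -> Prop :=
  fun s => forall Z, subset (F Z) Z -> Z s.
Definition gfp {St : Type} (F : (St -> Prop) -> (St -> Prop)) : St -> Prop :=
  fun s => exists Z, subset Z (F Z) /\ Z s.

Definition post {St : Type} (R : St -> St -> Prop) (A : St -> Prop) : St -> Prop :=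
  fun y => exists x, A x /\ R x y.

Definition reach {St : Type} (T : TS St) : St -> Prop :=
  lfp (fun Z y => ts_I T y \/ post (ts_R T) Z y).

(** Universal pre-image within the state space:
    AX Z = S \ pre(S \ Z), pre(Y) = { s in S | exists t in Y, R s t }. *)
Definition AXop {St : Type} (T : TS St) (Z : St -> Prop) : St -> Prop :=
  fun s => ts_S T s /\ forall t, ts_S T t -> ts_R T s t -> Z t.

(** * ACTL formulas (negation normal form; negation only on atoms, which is
      subsumed since atoms are arbitrary state predicates over the variables). *)
Inductive actl (St : Type) : Type :=
| Atom (p : St -> Prop)
| AAnd (f g : actl St)
| AOr (f g : actl St)
| AX (f : actl St)
| AU (f g : actl St)
| AR (f g : actl St)
| AG (f : actl St)
| AF (f : actl St).
Arguments Atom {St}.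

Fixpoint sat {St : Type} (T : TS St) (f : actl St) : St -> Prop :=
  match f with
  | Atom p => fun s => ts_S T s /\ p s
  | AAnd f g => fun s => sat T f s /\ sat T g s
  | AOr f g => fun s => sat T f s \/ sat T g s
  | AX f => AXop T (sat T f)
  | AU f g => lfp (fun Z s => sat T g s \/ (sat T f s /\ AXop T Z s))
  | AR f g => gfp (fun Z s => sat T g s /\ (sat T f s \/ AXop T Z s))
  | AG f => gfp (fun Z s => sat T f s /\ AXop T Z s)
  | AF f => lfp (fun Z s => sat T f s \/ AXop T Z s)
  end.

Definition models {St : Type} (T : TS St) (f : actl St) : Prop :=
  forall s, ts_I T s -> sat T f s.

Fixpoint dw_chain {St : Type} (dw : (St -> Prop) -> (St -> Prop) -> (St -> Prop))
  (y0 : St -> Prop) (x : nat -> St -> Prop) (k : nat) : St -> Prop :=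
  match k with
  | O => y0
  | S k' => dw (dw_chain dw y0 x k') (x (S k'))
  end.

Definition dual_widening {St : Type}
  (dw : (St -> Prop) -> (St -> Prop) -> (St -> Prop)) : Prop :=
  (forall x y s, dw x y s -> x s /\ y s) /\
  (forall (y0 : St -> Prop) (x : nat -> St -> Prop),
     exists m, forall k, m <= k ->
       forall s, dw_chain dw y0 x k s <-> dw_chain dw y0 x m s).

Fixpoint gfp_seq {St : Type} (T : TS St)
  (dw : (St -> Prop) -> (St -> Prop) -> (St -> Prop))
  (F : (St -> Prop) -> (St -> Prop)) (k : nat) : St -> Prop :=
  match k with
  | O => ts_S T
  | S k' => dw (gfp_seq T dw F k') (F (gfp_seq T dw F k'))
  end.
Definition gfp_under {St : Type} (T : TS St)
  (dw : (St -> Prop) -> (St -> Prop) -> (St -> Prop))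
  (F : (St -> Prop) -> (St -> Prop)) : St -> Prop :=
  fun s => forall k, gfp_seq T dw F k s.

Definition lfp_trunc {St : Type} (F : (St -> Prop) -> (St -> Prop)) (k : nat)
  : St -> Prop := Nat.iter k F (fun _ => False).

(** [under T dw f Y] : Y is a possible result of the approximate symbolic
    model checking [[f]]^-_T (the truncation point of each least-fixpoint
    iteration is arbitrary). *)
Inductive under {St : Type} (T : TS St)
  (dw : (St -> Prop) -> (St -> Prop) -> (St -> Prop)) :
  actl St -> (St -> Prop) -> Prop :=
| u_atom p : under T dw (Atom p) (fun s => ts_S T s /\ p s)
| u_and f g Yf Yg : under T dw f Yf -> under T dw g Yg ->
    under T dw (AAnd f g) (fun s => Yf s /\ Yg s)
| u_or f g Yf Yg : under T dw f Yf -> under T dw g Yg ->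
    under T dw (AOr f g) (fun s => Yf s \/ Yg s)
| u_ax f Yf : under T dw f Yf -> under T dw (AX f) (AXop T Yf)
| u_au f g Yf Yg k : under T dw f Yf -> under T dw g Yg ->
    under T dw (AU f g) (lfp_trunc (fun Z s => Yg s \/ (Yf s /\ AXop T Z s)) k)
| u_af f Yf k : under T dw f Yf ->
    under T dw (AF f) (lfp_trunc (fun Z s => Yf s \/ AXop T Z s) k)
| u_ar f g Yf Yg : under T dw f Yf -> under T dw g Yg ->
    under T dw (AR f g) (gfp_under T dw (fun Z s => Yg s /\ (Yf s \/ AXop T Z s)))
| u_ag f Yf : under T dw f Yf ->
    under T dw (AG f) (gfp_under T dw (fun Z s => Yf s /\ AXop T Z s)).

(** Concrete states: valuations of V_bool = BV and V_int = IV.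
    Predicates phi_i (i : P) over integer variables, V(phi_i) = vars i.
    Abstract states: valuations of V# = (V_bool + {b_i}) and V_int \ V(phi). *)
Definition cstate (BV IV : Type) : Type := ((BV -> bool) * (IV -> Z))%type.

Definition inVphi {P IV : Type} (vars : P -> IV -> Prop) (v : IV) : Prop :=
  exists i, vars i v.

Definition astate (BV IV P : Type) (vars : P -> IV -> Prop) : Type :=
  ((BV + P -> bool) * ({v : IV | ~ inVphi vars v} -> Z))%type.

Section Abstraction.
Variables (BV IV P : Type) (phi : P -> (IV -> Z) -> bool) (vars : P -> IV -> Prop).

Local Notation C := (cstate BV IV).
Local Notation A := (@astate BV IV P vars).

Definition agrees (a : A) (c : C) : Prop :=
  (forall b, fst a (inl b) = fst c b) /\
  (forall v, snd a v = snd c (proj1_sig v)) /\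
  (forall i, phi i (snd c) = fst a (inr i)).

(** alpha(s) = exists V(phi). (s /\ /\_i (phi_i <-> b_i)) *)
Definition alpha (s : C -> Prop) : A -> Prop :=
  fun a => exists c, s c /\ agrees a c.

Definition CS (a a' : A) (c c' : C) : Prop :=
  forall i, (forall v, vars i v -> snd c' v = snd c v) -> fst a' (inr i) = fst a (inr i).

(** alpha^tau(r) = exists V(phi). exists V(phi').
      (r /\ CS /\ /\_i (phi_i <-> b_i) /\ /\_i (phi_i' <-> b_i')) *)
Definition alpha_tau (r : C -> C -> Prop) : A -> A -> Prop :=
  fun a a' => exists c c', r c c' /\ CS a a' c c' /\ agrees a c /\ agrees a' c'.

Definition abstractTS (T : TS C) : TS A :=
  mkTS (alpha (ts_S T)) (alpha (ts_I T)) (alpha_tau (ts_R T)).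

(** gamma, on atomic subformulas: substitute phi_i for b_i *)
Definition subst_phi (c : C) : A :=
  (fun x => match x with inl b => fst c b | inr i => phi i (snd c) end,
   fun v => snd c (proj1_sig v)).

Fixpoint gamma (f : actl A) : actl C :=
  match f with
  | Atom p => Atom (fun c => p (subst_phi c))
  | AAnd f g => AAnd (gamma f) (gamma g)
  | AOr f g => AOr (gamma f) (gamma g)
  | AX f => AX (gamma f)
  | AU f g => AU (gamma f) (gamma g)
  | AR f g => AR (gamma f) (gamma g)
  | AG f => AG (gamma f)
  | AF f => AF (gamma f)
  end.
End Abstraction.

(** T#_RS : T# with state space replaced by the over-approximation X *)
Definition restrictTS {St : Type} (X : St -> Prop) (T : TS St) : TS St :=
  mkTS X (ts_I T) (ts_R T).

From Stdlib Require Import ZArith Arith.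

(** The map [subst_phi], which evaluates every predicate [phi_i] on a
    concrete state, sends each concrete transition to an abstract one (the
    constraint [CS] holds because [phi_i] only reads its own variables), so
    it sends reachable concrete states to reachable abstract states, hence
    into [X].  By induction on the approximate model-checking run, every
    reachable concrete state whose abstraction lies in the computed set [Y]
    satisfies [gamma f]: truncated least-fixpoint iterates stay below the
    concrete least fixpoint, and the stabilized dual-widening iteration is a
    post-fixpoint, so it is covered by the concrete greatest fixpoint by
    coinduction. *)

Definition monotone {St : Type} (F : (St -> Prop) -> St -> Prop) : Prop :=
  forall Z1 Z2, subset Z1 Z2 -> subset (F Z1) (F Z2).

Lemma lfp_fold {St : Type} (F : (St -> Prop) -> St -> Prop) :
  monotone F -> subset (F (lfp F)) (lfp F).
Proof.
  intros Hmon s Hs Z HZ. apply HZ. apply (Hmon (lfp F)); [|exact Hs].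
  intros t Ht. exact (Ht Z HZ).
Qed.

Lemma AXop_monotone {St : Type} (T : TS St) : monotone (AXop T).
Proof. intros Z1 Z2 HZ s [Hs Hnext]. split; auto. Qed.

Section DualWideningIteration.
Context {St : Type} (T : TS St).
Variable dw : (St -> Prop) -> (St -> Prop) -> St -> Prop.
Hypothesis Hdw : dual_widening dw.
Variable F : (St -> Prop) -> St -> Prop.

Local Notation seq := (gfp_seq T dw F).

Lemma gfp_seq_dw_chain k :
  seq k = dw_chain dw (ts_S T) (fun n => F (seq (pred n))) k.
Proof. induction k as [|k IH]; simpl; [reflexivity|]. now rewrite <- IH. Qed.

Lemma gfp_seq_S_sub k : subset (seq (S k)) (seq k).
Proof. intros s Hs. exact (proj1 (proj1 Hdw _ _ _ Hs)). Qed.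

Lemma gfp_seq_S_sub_F k : subset (seq (S k)) (F (seq k)).
Proof. intros s Hs. exact (proj2 (proj1 Hdw _ _ _ Hs)). Qed.

Lemma gfp_seq_antitone k n : k <= n -> subset (seq n) (seq k).
Proof.
  induction 1 as [|n _ IH]; intros s Hs; [exact Hs|].
  apply IH, gfp_seq_S_sub, Hs.
Qed.

Lemma gfp_seq_stable : exists m, subset (seq m) (gfp_under T dw F).
Proof.
  destruct (proj2 Hdw (ts_S T) (fun n => F (seq (pred n)))) as [m Hm].
  exists m. intros s Hs k.
  destruct (le_lt_dec m k) as [Hmk|Hkm].
  - rewrite gfp_seq_dw_chain. apply (Hm k Hmk). now rewrite <- gfp_seq_dw_chain.
  - exact (gfp_seq_antitone _ _ (Nat.lt_le_incl _ _ Hkm) _ Hs).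
Qed.

Lemma gfp_under_postfixpoint :
  monotone F -> subset (gfp_under T dw F) (F (gfp_under T dw F)).
Proof.
  intros Hmon s Hs. destruct gfp_seq_stable as [m Hm].
  apply (Hmon (seq m) _ Hm), gfp_seq_S_sub_F, Hs.
Qed.

End DualWideningIteration.

Section Transfer.
Context {C A : Type} (Q : C -> Prop) (h : C -> A).

Definition sub_along (Ya : A -> Prop) (Yc : C -> Prop) : Prop :=
  forall c, Q c -> Ya (h c) -> Yc c.

Definition transfers (G : (A -> Prop) -> A -> Prop) (F : (C -> Prop) -> C -> Prop) : Prop :=
  forall Za Zc, sub_along Za Zc -> sub_along (G Za) (F Zc).

Lemma lfp_trunc_sub_along G F :
  monotone F -> transfers G F -> forall k, sub_along (lfp_trunc G k) (lfp F).
Proof.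
  intros Hmon HGF k. induction k as [|k IH]; intros c Hc HY; [destruct HY|].
  apply lfp_fold; [exact Hmon|]. exact (HGF _ _ IH c Hc HY).
Qed.

Lemma gfp_under_sub_along (TA : TS A) dw G F :
  dual_widening dw -> monotone G -> transfers G F ->
  sub_along (gfp_under TA dw G) (gfp F).
Proof.
  intros Hdw Hmon HGF c Hc HU.
  exists (fun d => Q d /\ gfp_under TA dw G (h d)). split; [|auto].
  intros d [Hd HUd]. apply (HGF (gfp_under TA dw G)); [|exact Hd|].
  - intros e He HUe; auto.
  - exact (gfp_under_postfixpoint _ _ Hdw _ Hmon _ HUd).
Qed.

End Transfer.

Section Reachability.
Context {St : Type} (T : TS St).

Lemma reach_ind (Z : St -> Prop) :
  subset (ts_I T) Z -> (forall s s', Z s -> ts_R T s s' -> Z s') -> subset (reach T) Z.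
Proof. intros HI HR s Hs. apply Hs. intros t [Ht|[u [Hu Hut]]]; eauto. Qed.

Lemma reach_init : subset (ts_I T) (reach T).
Proof. intros s Hs Z HZ. apply HZ. now left. Qed.

Lemma reach_step s s' : reach T s -> ts_R T s s' -> reach T s'.
Proof.
  intros Hs Hss' Z HZ. apply HZ. right. exists s.
  split; [exact (Hs Z HZ)|exact Hss'].
Qed.

Lemma reach_sub_S :
  subset (ts_I T) (ts_S T) -> (forall s s', ts_R T s s' -> ts_S T s') ->
  subset (reach T) (ts_S T).
Proof. intros HIS HRS. apply reach_ind; eauto. Qed.

End Reachability.

Section PredicateAbstraction.
Variables (BV IV P : Type) (phi : P -> (IV -> Z) -> bool) (vars : P -> IV -> Prop).
Hypothesis Hvars : forall i (sg tau : IV -> Z),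
  (forall v, vars i v -> sg v = tau v) -> phi i sg = phi i tau.
Variable T : TS (cstate BV IV).

Local Notation sp := (subst_phi phi vars).
Local Notation TA := (abstractTS phi vars T).

Lemma agrees_subst_phi (c : cstate BV IV) : agrees phi (sp c) c.
Proof. repeat split. Qed.

Lemma subst_phi_step c c' : ts_R T c c' -> ts_R TA (sp c) (sp c').
Proof.
  intros Hcc'. exists c, c'. repeat split; try exact Hcc'; try apply agrees_subst_phi.
  intros i Hi. apply Hvars, Hi.
Qed.

Lemma reach_subst_phi c : reach T c -> reach TA (sp c).
Proof.
  apply (reach_ind T (fun c => reach TA (sp c))).
  - intros c0 Hc0. apply (reach_init TA). exists c0.
    split; [exact Hc0|apply agrees_subst_phi].
  - intros c0 c1 Hc0 Hc01. exact (reach_step _ _ _ Hc0 (subst_phi_step _ _ Hc01)).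
Qed.

Hypothesis HIS : subset (ts_I T) (ts_S T).
Hypothesis HRS : forall c c', ts_R T c c' -> ts_S T c'.
Variable X : astate BV vars -> Prop.
Hypothesis HX : subset (reach TA) X.
Variable dw :
  (astate BV vars -> Prop) -> (astate BV vars -> Prop) -> astate BV vars -> Prop.
Hypothesis Hdw : dual_widening dw.

Local Notation TX := (restrictTS X TA).
Local Notation sound := (sub_along (reach T) sp).

Lemma AXop_transfers : transfers (reach T) sp (AXop TX) (AXop T).
Proof.
  intros Za Zc HZ c Hc [_ Hnext]. split; [exact (reach_sub_S T HIS HRS c Hc)|].
  intros c' _ Hcc'. pose proof (reach_step T c c' Hc Hcc') as Hc'.
  apply HZ; [exact Hc'|]. apply Hnext.
  - apply HX, reach_subst_phi, Hc'.
  - apply subst_phi_step, Hcc'.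
Qed.

Lemma under_sound f Y : under TX dw f Y -> sound Y (sat T (gamma phi f)).
Proof.
  pose proof AXop_transfers as HAX.
  induction 1 as [p|f g Yf Yg _ IHf _ IHg|f g Yf Yg _ IHf _ IHg|f Yf _ IHf
                  |f g Yf Yg k _ IHf _ IHg|f Yf k _ IHf
                  |f g Yf Yg _ IHf _ IHg|f Yf _ IHf]; simpl.
  - intros c Hc HY. split; [exact (reach_sub_S T HIS HRS c Hc)|exact (proj2 HY)].
  - intros c Hc [HYf HYg]. split; auto.
  - intros c Hc [HYf|HYg]; [left|right]; auto.
  - exact (HAX _ _ IHf).
  - apply lfp_trunc_sub_along.
    + intros Z1 Z2 HZ c [Hg|[Hf HZ1]]; [now left|right].
      split; [exact Hf|exact (AXop_monotone _ _ _ HZ _ HZ1)].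
    + intros Za Zc HZ c Hc [Hg|[Hf HZa]]; [left; auto|right].
      split; [auto|exact (HAX _ _ HZ c Hc HZa)].
  - apply lfp_trunc_sub_along.
    + intros Z1 Z2 HZ c [Hf|HZ1]; [now left|right; exact (AXop_monotone _ _ _ HZ _ HZ1)].
    + intros Za Zc HZ c Hc [Hf|HZa]; [left; auto|right; exact (HAX _ _ HZ c Hc HZa)].
  - apply gfp_under_sub_along; [exact Hdw| |].
    + intros Z1 Z2 HZ a [Hg [Hf|HZ1]]; split; auto.
      right. exact (AXop_monotone _ _ _ HZ _ HZ1).
    + intros Za Zc HZ c Hc [Hg [Hf|HZa]]; split; auto.
      right. exact (HAX _ _ HZ c Hc HZa).
  - apply gfp_under_sub_along; [exact Hdw| |].
    + intros Z1 Z2 HZ a [Hf HZ1]. split; [exact Hf|exact (AXop_monotone _ _ _ HZ _ HZ1)].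
    + intros Za Zc HZ c Hc [Hf HZa]. split; [auto|exact (HAX _ _ HZ c Hc HZa)].
Qed.

End PredicateAbstraction.

Theorem theorem1
  (BV IV P : Type)
  (phi : P -> (IV -> Z) -> bool) (vars : P -> IV -> Prop)
  (Hvars : forall i (sg tau : IV -> Z),
      (forall v, vars i v -> sg v = tau v) -> phi i sg = phi i tau)
  (T : TS (cstate BV IV))
  (HIS : subset (ts_I T) (ts_S T))
  (HRS : forall c c', ts_R T c c' -> ts_S T c /\ ts_S T c')
  (X : @astate BV IV P vars -> Prop)
  (HX : subset (reach (abstractTS phi vars T)) X)
  (dw : (@astate BV IV P vars -> Prop) -> (@astate BV IV P vars -> Prop) ->
        (@astate BV IV P vars -> Prop))
  (Hdw : dual_widening dw)
  (f : actl (@astate BV IV P vars))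
  (Y : @astate BV IV P vars -> Prop)
  (HY : under (restrictTS X (abstractTS phi vars T)) dw f Y)
  (HI : subset (ts_I (abstractTS phi vars T)) Y) :
  models T (gamma phi f).
Proof.
  intros c Hc.
  apply (under_sound BV IV P phi vars Hvars T HIS
           (fun c c' Hcc' => proj2 (HRS c c' Hcc')) X HX dw Hdw f Y HY c).
  - exact (reach_init T c Hc).
  - apply HI. exists c. split; [exact Hc|apply agrees_subst_phi].
Qed.
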